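(* Let $\mathcal{S}=(\mathbb{Z},\le)$ and for $m\in\mathbb{N}$ let $\mathcal{S}_m$ be the substructure with universe $2\mathbb{Z}\cup(\mathbb{Z}\cap[-2m,2m])$, indexed by $\mathbb{N}$ with its usual order. Then $\lim_{\mathbb{N}}\mathrm{Th}(\mathcal{S}_m^* )=\mathrm{Th}(\mathcal{S}^* )$, while for each $m$, $\mathcal{S}_m$ is not an elementary substructure of $\mathcal{S}$, nor of $\mathcal{S}_k$ for any $k>m$.
   Context: $\mathrm{Th}(\mathcal{T}^* )$ is the set of sentences in the language $\{\le\}$ expanded by a constant for each element of the universe of $\mathcal{T}$ that are true in $\mathcal{T}$; all are regarded as subsets of the set of sentences with constants from $\mathbb{Z}$. For a family $\{\Delta_m\}_{m\in\mathbb{N}}$: $\limsup\Delta_m=\{\theta:\forall n\,\exists m\ge n\,[\theta\in\Delta_m]\}$, $\liminf\Delta_m=\{\theta:\exists n\,\forall m\ge n\,[\theta\in\Delta_m]\}$, and $\lim\Delta_m=\Delta$ means both equal $\Delta$. *)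

From Stdlib Require Import ZArith.
Open Scope Z_scope.

(* Terms: de Bruijn variables, or constants naming integers. *)
Inductive term : Type :=
| tvar : nat -> term
| tconst : Z -> term.

Inductive formula : Type :=
| Fle : term -> term -> formula
| Feq : term -> term -> formula
| Fbot : formula
| Fneg : formula -> formula
| Fand : formula -> formula -> formula
| For : formula -> formula -> formula
| Fimp : formula -> formula -> formula
| Fex : formula -> formula      (* binds de Bruijn index 0 *)
| Fall : formula -> formula.

(* A structure is a substructure of (Z, <=), given by its universe U. *)
Definition universe := Z -> Prop.

Definition scons (a : Z) (e : nat -> Z) : nat -> Z :=
  fun n => match n with O => a | S k => e k end.

Definition teval (e : nat -> Z) (t : term) : Z :=
  match t with tvar n => e n | tconst z => z end.

Fixpoint sat (U : universe) (e : nat -> Z) (phi : formula) : Prop :=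
  match phi with
  | Fle t1 t2 => teval e t1 <= teval e t2
  | Feq t1 t2 => teval e t1 = teval e t2
  | Fbot => False
  | Fneg p => ~ sat U e p
  | Fand p q => sat U e p /\ sat U e q
  | For p q => sat U e p \/ sat U e q
  | Fimp p q => sat U e p -> sat U e q
  | Fex p => exists a, U a /\ sat U (scons a e) p
  | Fall p => forall a, U a -> sat U (scons a e) p
  end.

Definition tbound (k : nat) (t : term) : Prop :=
  match t with tvar n => (n < k)%nat | tconst _ => True end.

Fixpoint bound (k : nat) (phi : formula) : Prop :=
  match phi with
  | Fle t1 t2 | Feq t1 t2 => tbound k t1 /\ tbound k t2
  | Fbot => True
  | Fneg p => bound k p
  | Fand p q | For p q | Fimp p q => bound k p /\ bound k q
  | Fex p | Fall p => bound (S k) p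
  end.

Definition sentence (phi : formula) : Prop := bound O phi.

Definition tconsts_in (U : universe) (t : term) : Prop :=
  match t with tvar _ => True | tconst z => U z end.

Fixpoint consts_in (U : universe) (phi : formula) : Prop :=
  match phi with
  | Fle t1 t2 | Feq t1 t2 => tconsts_in U t1 /\ tconsts_in U t2
  | Fbot => True
  | Fneg p => consts_in U p
  | Fand p q | For p q | Fimp p q => consts_in U p /\ consts_in U q
  | Fex p | Fall p => consts_in U p
  end.

(* Th of T-star : sentences with constants naming elements of the universe of T,
   true in T.  A subset of the set of all sentences with constants from Z. *)
Definition Th_star (U : universe) (theta : formula) : Prop :=
  sentence theta /\ consts_in U theta /\ sat U (fun _ => 0) theta.

Definition limsup (D : nat -> formula -> Prop) (theta : formula) : Prop :=
  forall n, exists m, (n <= m)%nat /\ D m theta.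

Definition liminf (D : nat -> formula -> Prop) (theta : formula) : Prop :=
  exists n, forall m, (n <= m)%nat -> D m theta.

Definition lim_is (D : nat -> formula -> Prop) (T : formula -> Prop) : Prop :=
  (forall theta, limsup D theta <-> T theta) /\
  (forall theta, liminf D theta <-> T theta).

Definition constfree (phi : formula) : Prop := consts_in (fun _ => False) phi.

Definition elem_substr (A B : universe) : Prop :=
  (forall z, A z -> B z) /\
  forall (phi : formula) (e : nat -> Z),
    constfree phi -> (forall n, A (e n)) -> (sat A e phi <-> sat B e phi).

Definition S_univ : universe := fun _ => True.

Definition S_m (m : nat) : universe :=
  fun z => Z.Even z \/ (- 2 * Z.of_nat m <= z <= 2 * Z.of_nat m).

(* Every sentence mentions only finitely many constants, all in some interval
   [-2m, 2m].  For such m the map fixing [-2m, 2m] and sending an even z outside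
   it to z/2 + sign(z) m is an order isomorphism from S_m onto (Z, <=) fixing
   those constants, so the sentence has the same truth value in S_m and in
   (Z, <=): the theories of the S_m are eventually equal to Th(S) sentence by
   sentence.  On the other hand 2m and 2m+2 are adjacent in S_m but not in any
   structure containing 2m+1, which a formula with two free variables detects. *)
From Stdlib Require Import ZArith Lia.
Open Scope Z_scope.

Section OrderIso.
Variables (U V : universe) (f : Z -> Z) (C : Z -> Prop).
Hypothesis f_mono : forall x y, U x -> U y -> (x <= y <-> f x <= f y).
Hypothesis f_maps : forall x, U x -> V (f x).
Hypothesis f_surj : forall b, V b -> exists a, U a /\ f a = b.
Hypothesis f_fixes : forall c, C c -> U c /\ f c = c.

Lemma iso_eq_iff x y : U x -> U y -> (x = y <-> f x = f y).
Proof.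
  intros Ux Uy; split; intros E; [now subst|].
  apply Z.le_antisymm; [apply (f_mono x y) | apply (f_mono y x)]; auto; lia.
Qed.

Lemma teval_iso e e' t : tconsts_in C t -> (forall n, U (e n)) ->
  (forall n, e' n = f (e n)) -> U (teval e t) /\ teval e' t = f (teval e t).
Proof.
  destruct t as [n | z]; simpl; intros Ht He He'; auto.
  destruct (f_fixes z Ht); split; auto.
Qed.

Lemma sat_iso phi : forall e e', consts_in C phi -> (forall n, U (e n)) ->
  (forall n, e' n = f (e n)) -> (sat U e phi <-> sat V e' phi).
Proof.
  induction phi as [t1 t2 | t1 t2 | | p IHp | p IHp q IHq | p IHp q IHq
                   | p IHp q IHq | p IHp | p IHp];
    simpl; intros e e' Hc He He'.
  - destruct Hc as [H1 H2].
    destruct (teval_iso e e' t1 H1 He He') as [U1 ->].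
    destruct (teval_iso e e' t2 H2 He He') as [U2 ->].
    now apply f_mono.
  - destruct Hc as [H1 H2].
    destruct (teval_iso e e' t1 H1 He He') as [U1 ->].
    destruct (teval_iso e e' t2 H2 He He') as [U2 ->].
    now apply iso_eq_iff.
  - tauto.
  - rewrite (IHp e e'); tauto.
  - destruct Hc. rewrite (IHp e e'), (IHq e e'); tauto.
  - destruct Hc. rewrite (IHp e e'), (IHq e e'); tauto.
  - destruct Hc. rewrite (IHp e e'), (IHq e e'); tauto.
  - assert (Hs : forall a, U a -> (sat U (scons a e) p <-> sat V (scons (f a) e') p)).
    { intros a Ua. apply IHp; auto; intros [|n]; simpl; auto. }
    split.
    + intros [a [Ua H]]. exists (f a). split; auto. now apply Hs.
    + intros [b [Vb H]]. destruct (f_surj b Vb) as [a [Ua <-]].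
      exists a. split; auto. now apply Hs.
  - assert (Hs : forall a, U a -> (sat U (scons a e) p <-> sat V (scons (f a) e') p)).
    { intros a Ua. apply IHp; auto; intros [|n]; simpl; auto. }
    split.
    + intros H b Vb. destruct (f_surj b Vb) as [a [Ua <-]]. apply Hs; auto.
    + intros H a Ua. apply Hs; auto.
Qed.

End OrderIso.

Definition tconst_bound (t : term) : Z :=
  match t with tvar _ => 0 | tconst z => Z.abs z end.

Fixpoint const_bound (phi : formula) : Z :=
  match phi with
  | Fle t1 t2 | Feq t1 t2 => Z.max (tconst_bound t1) (tconst_bound t2)
  | Fbot => 0
  | Fneg p | Fex p | Fall p => const_bound p
  | Fand p q | For p q | Fimp p q => Z.max (const_bound p) (const_bound q)
  end.

Lemma consts_in_const_bound (P : Z -> Prop) phi :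
  (forall c, Z.abs c <= const_bound phi -> P c) -> consts_in P phi.
Proof.
  induction phi; simpl; intros H; try tauto;
  try (split; [apply IHphi1 | apply IHphi2]; intros c Hc; apply H; lia);
  try (apply IHphi; auto);
  (split; [destruct t | destruct t0]; simpl in *; auto; apply H; lia).
Qed.

Definition squeeze (m : nat) (z : Z) : Z :=
  let M := Z.of_nat m in
  if Z_lt_le_dec (2 * M) z then M + z / 2
  else if Z_lt_le_dec z (-2 * M) then - M + z / 2 else z.

Lemma squeeze_id m c :
  - 2 * Z.of_nat m <= c <= 2 * Z.of_nat m -> squeeze m c = c.
Proof.
  intros Hc. unfold squeeze.
  destruct (Z_lt_le_dec (2 * Z.of_nat m) c); [lia|].
  destruct (Z_lt_le_dec c (-2 * Z.of_nat m)); [lia|]. reflexivity.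
Qed.

Lemma squeeze_mono m x y :
  S_m m x -> S_m m y -> (x <= y <-> squeeze m x <= squeeze m y).
Proof.
  unfold S_m, squeeze. intros Hx Hy.
  destruct (Z_lt_le_dec (2 * Z.of_nat m) x);
  [|destruct (Z_lt_le_dec x (-2 * Z.of_nat m))];
  (destruct (Z_lt_le_dec (2 * Z.of_nat m) y);
  [|destruct (Z_lt_le_dec y (-2 * Z.of_nat m))]);
  destruct Hx as [[kx ->] | Hx]; destruct Hy as [[ky ->] | Hy];
  try lia; Z.div_mod_to_equations; lia.
Qed.

Lemma squeeze_surj m b : exists a, S_m m a /\ squeeze m a = b.
Proof.
  unfold S_m, squeeze. set (M := Z.of_nat m).
  destruct (Z_lt_le_dec (2 * M) b).
  - exists (2 * (b - M)). split; [left; exists (b - M); lia|].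
    destruct (Z_lt_le_dec (2 * M) (2 * (b - M))); [|lia].
    Z.div_mod_to_equations; lia.
  - destruct (Z_lt_le_dec b (-2 * M)).
    + exists (2 * (b + M)). split; [left; exists (b + M); lia|].
      destruct (Z_lt_le_dec (2 * M) (2 * (b + M))); [lia|].
      destruct (Z_lt_le_dec (2 * (b + M)) (-2 * M)); [|lia].
      Z.div_mod_to_equations; lia.
    + exists b. split; [right; lia|].
      destruct (Z_lt_le_dec (2 * M) b); [lia|].
      destruct (Z_lt_le_dec b (-2 * M)); [lia|]. reflexivity.
Qed.

Lemma Th_star_S_m theta m : (Z.to_nat (const_bound theta) <= m)%nat ->
  (Th_star (S_m m) theta <-> Th_star S_univ theta).
Proof.
  intros Hm. unfold Th_star.
  set (Box := fun c => - 2 * Z.of_nat m <= c <= 2 * Z.of_nat m).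
  assert (HI : consts_in Box theta).
  { apply consts_in_const_bound. intros c Hc. unfold Box. lia. }
  assert (Hsat : sat (S_m m) (fun _ => 0) theta <-> sat S_univ (fun _ => 0) theta).
  { apply (sat_iso (S_m m) S_univ (squeeze m) Box); auto.
    - apply squeeze_mono.
    - intros; exact I.
    - intros b _. apply squeeze_surj.
    - intros c Hc. split; [now right | now apply squeeze_id].
    - intros; left; exists 0; lia.
    - intros n. symmetry. apply squeeze_id. lia. }
  assert (consts_in (S_m m) theta).
  { apply consts_in_const_bound. intros c Hc. right. lia. }
  assert (consts_in S_univ theta).
  { apply consts_in_const_bound. intros; exact I. }
  tauto.
Qed.

Lemma lim_is_eventually (D : nat -> formula -> Prop) (T : formula -> Prop) :
  (forall theta, exists N, forall m, (N <= m)%nat -> (D m theta <-> T theta)) ->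
  lim_is D T.
Proof.
  intros HD. split; intros theta; destruct (HD theta) as [N HN]; split.
  - intros H. destruct (H N) as [m [Hm Ht]]. now apply (HN m).
  - intros H n. exists (Nat.max n N). split; [lia|]. apply HN; [lia | exact H].
  - intros [n H]. apply (HN (Nat.max n N)); [lia|]. apply H; lia.
  - intros H. exists N. intros m Hm. now apply HN.
Qed.

Definition Flt (t1 t2 : term) : formula := Fand (Fle t1 t2) (Fneg (Feq t1 t2)).

(* With variables 0 and 1 free: something lies strictly between them. *)
Definition Fbetween : formula := Fex (Fand (Flt (tvar 1) (tvar 0)) (Flt (tvar 0) (tvar 2))).

Lemma sat_Fbetween U e : sat U e Fbetween <-> exists c, U c /\ e O < c < e 1%nat.
Proof.
  unfold Fbetween, Flt; cbn [sat teval scons].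
  split; intros [c [Uc Hc]]; exists c; split; auto; lia.
Qed.

Definition env2 (a b : Z) : nat -> Z := fun n => match n with O => a | _ => b end.

Lemma not_elem_substr_gap (A B : universe) a b c :
  A a -> A b -> (forall x, A x -> ~ (a < x < b)) -> B c -> a < c < b ->
  ~ elem_substr A B.
Proof.
  intros Aa Ab Hgap Bc Hc [_ Helem].
  assert (Henv : forall n, A (env2 a b n)) by (intros [|n]; auto).
  assert (HB : sat B (env2 a b) Fbetween) by (apply sat_Fbetween; now exists c).
  apply (Helem Fbetween (env2 a b)) in HB; [| cbv; tauto | exact Henv].
  apply sat_Fbetween in HB. destruct HB as [x [Ax Hx]].
  exact (Hgap x Ax Hx).
Qed.

Lemma not_elem_substr_S_m m (B : universe) :
  B (2 * Z.of_nat m + 1) -> ~ elem_substr (S_m m) B.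
Proof.
  intros HB.
  apply (not_elem_substr_gap _ B (2 * Z.of_nat m) (2 * Z.of_nat m + 2) (2 * Z.of_nat m + 1));
    auto; try lia.
  - left. exists (Z.of_nat m). lia.
  - left. exists (Z.of_nat m + 1). lia.
  - intros x [[k ->] | Hx] Hlt; lia.
Qed.

Theorem mainTheorem8 :
  lim_is (fun m => Th_star (S_m m)) (Th_star S_univ) /\
  (forall m : nat,
     ~ elem_substr (S_m m) S_univ /\
     (forall k : nat, (m < k)%nat -> ~ elem_substr (S_m m) (S_m k))).
Proof.
  split.
  - apply lim_is_eventually. intros theta.
    exists (Z.to_nat (const_bound theta)). apply Th_star_S_m.
  - intros m. split.
    + apply not_elem_substr_S_m. exact I.
    + intros k Hk. apply not_elem_substr_S_m. right. lia.
Qed.
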